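(* For every $k\ge1$, $\mathrm{ABD}(k\text{-CNF}^+)\le^{\mathrm{CV}}\mathrm{SimpleSAT}^k$. Moreover, the reduction maps an instance $(\mathrm{KB},H,M)$ to a $\mathrm{SimpleSAT}^k$ instance whose variables all belong to $H$.
   Context: $k\text{-CNF}^+$ is the constraint language of positive clauses of arity $k$ (so $\Gamma$-formulas are conjunctions of clauses $(x_1\vee\dots\vee x_k)$ with not necessarily distinct variables). An instance of $\mathrm{ABD}(\Gamma)$ is $(\mathrm{KB},H,M)$, $\mathrm{KB}$ a $\Gamma$-formula, $H,M$ sets of variables; it asks whether there is $E\subseteq H\cup\{\neg x:x\in H\}$ with $\mathrm{KB}\wedge E$ satisfiable and $\mathrm{KB}\wedge E\models m$ for all $m\in M$. $\mathrm{SimpleSAT}^p$ is satisfiability of formulas $\bigwedge_i C_i\wedge\bigwedge_j(\bigvee_\ell T_{j,\ell})$, with each $C_i$ a clause of at most $p$ positive literals and each $T_{j,\ell}$ a conjunction of negative literals. For problems $A,B$ whose instances have variable sets, a CV-reduction $A\le^{\mathrm{CV}}B$ is a polynomial-time map $f$ such that $I$ is a yes-instance of $A$ iff $f(I)$ is a yes-instance of $B$ and $|\mathrm{var}(f(I))|\le|\mathrm{var}(I)|+O(1)$. *)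

From mathcomp Require Import all_boot.
Set Implicit Arguments. Unset Strict Implicit. Unset Printing Implicit Defensive.

Definition assignment := nat -> bool.

(* A positive clause (x_1 \/ ... \/ x_n) is the list of its variables
   (repetitions allowed); a positive CNF is a list of positive clauses. *)
Definition pclause := seq nat.
Definition pcnf := seq pclause.

Definition kCNFpos (k : nat) (F : pcnf) : bool := all (fun C => size C == k) F.

Definition sat_pclause (s : assignment) (C : pclause) : bool := has s C.
Definition sat_pcnf (s : assignment) (F : pcnf) : bool := all (sat_pclause s) F.

Record abd_instance := ABDInst {
  KB : pcnf;
  Hyps : seq nat;
  Mans : seq nat
}.

(* a literal (x, b) is x if b = true and ~x if b = false *)
Definition literal := (nat * bool)%type.
Definition lit_holds (s : assignment) (l : literal) : bool := s l.1 == l.2.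

Definition ABD (I : abd_instance) : Prop :=
  exists E : seq literal,
    (forall l, l \in E -> l.1 \in Hyps I) /\
    (exists s : assignment, sat_pcnf s (KB I) /\ all (lit_holds s) E) /\
    (forall m, m \in Mans I ->
       forall s : assignment, sat_pcnf s (KB I) -> all (lit_holds s) E -> s m).

Definition vars_abd (I : abd_instance) : seq nat :=
  undup (flatten (KB I) ++ Hyps I ++ Mans I).

(* A formula  /\_i C_i  /\  /\_j ( \/_l T_{j,l} ):
   - sclauses: the positive clauses C_i (lists of variables);
   - sdisjs: each disjunction is a list of terms, each term T_{j,l} is the
     conjunction of the negations of the listed variables. *)
Record simple_formula := SimpleF {
  sclauses : seq (seq nat);
  sdisjs : seq (seq (seq nat))
}.

Definition is_simple (p : nat) (F : simple_formula) : bool :=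
  all (fun C => size C <= p) (sclauses F).

Definition sat_term (s : assignment) (T : seq nat) : bool := all (fun x => ~~ s x) T.

Definition sat_simple (s : assignment) (F : simple_formula) : bool :=
  all (has s) (sclauses F) && all (has (sat_term s)) (sdisjs F).

Definition SimpleSAT (p : nat) (F : simple_formula) : Prop :=
  is_simple p F /\ exists s : assignment, sat_simple s F.

Definition vars_simple (F : simple_formula) : seq nat :=
  undup (flatten (sclauses F) ++ flatten (flatten (sdisjs F))).

Definition reduce (I : abd_instance) : simple_formula :=
  let H := Hyps I in
  SimpleF
    ([seq C <- KB I | all (fun x => x \in H) C] ++
     [seq [:: m] | m <- Mans I & m \in H])
    [seq [seq [seq x <- C | x != m] | C <- KB I &
            (m \in C) && all (fun x => (x == m) || (x \in H)) C]
       | m <- Mans I & m \notin H].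

(* The reduction keeps the clauses of KB inside H, turns each manifestation in H
   into a unit clause, and for a manifestation m outside H asks that some clause
   C of KB with m in C and C \ {m} inside H have C \ {m} false.  An explanation
   E is then read off a model s of the SimpleSAT formula as the full literal
   assignment s|_H, consistent with KB since s made true outside H satisfies
   KB.  Conversely, if E explains m outside H, patch a model of
   KB /\ E to be false at m and true outside H: it still satisfies E, so it must
   falsify some clause of KB, and that clause yields the required term. *)
From mathcomp Require Import all_boot.

Definition patch (H : seq nat) (s d : assignment) : assignment :=
  fun x => if x \in H then s x else d x.

Lemma vars_reduce_sub_Hyps (I : abd_instance) :
  {subset vars_simple (reduce I) <= Hyps I}.
Proof.
move=> x; rewrite /vars_simple mem_undup mem_cat => /orP[].
- case/flattenP=> C; rewrite /= mem_cat => /orP[].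
  + by rewrite mem_filter => /andP[/allP hC _] /hC.
  + by case/mapP=> m; rewrite mem_filter => /andP[hm _] ->; rewrite inE => /eqP ->.
- case/flattenP=> _ /flattenP [_ /mapP [m _ ->] /mapP [C hC ->]].
  rewrite !mem_filter in hC * => /andP[xm xC].
  by case/andP: hC => /andP[_ /allP /(_ x xC)]; rewrite (negbTE xm).
Qed.

Lemma size_vars_reduce (I : abd_instance) :
  size (vars_simple (reduce I)) <= size (vars_abd I).
Proof.
apply: uniq_leq_size; first exact: undup_uniq.
by move=> x /vars_reduce_sub_Hyps hx; rewrite /vars_abd mem_undup !mem_cat hx orbT.
Qed.

Lemma reduce_simple {k : nat} {I : abd_instance} :
  0 < k -> kCNFpos k (KB I) -> is_simple k (reduce I).
Proof.
move=> k_gt0 /allP hK; apply/allP => C; rewrite /= mem_cat => /orP[].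
- by rewrite mem_filter => /andP[_ /hK /eqP ->].
- by case/mapP=> m _ ->.
Qed.

Lemma all_lit_holds_patch (H : seq nat) (s d : assignment) (E : seq literal) :
  (forall l, l \in E -> l.1 \in H) ->
  all (lit_holds (patch H s d)) E = all (lit_holds s) E.
Proof. by move=> hE; apply: eq_in_all => l /hE; rewrite /lit_holds /patch => ->. Qed.

Lemma falsified_clause_term {H : seq nat} {s : assignment} {m : nat} {C : pclause} :
  m \notin H -> has s C -> ~~ has (patch H s (predC1 m)) C ->
  [&& m \in C, all (fun x => (x == m) || (x \in H)) C
    & sat_term s [seq x <- C | x != m]].
Proof.
move=> mH sC /hasPn falseC.
have inHm x : x \in C -> (x == m) || (x \in H).
  by move=> /falseC; rewrite /patch; case: (x \in H); rewrite ?orbT //= negbK => ->.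
have hmC : m \in C.
  case/hasP: sC => x xC sx; case/orP: (inHm x xC) => [/eqP <- //|xH].
  by move: (falseC x xC); rewrite /patch xH sx.
rewrite hmC /=; apply/andP; split; first by apply/allP.
apply/allP => x; rewrite mem_filter => /andP[xm xC].
move: (inHm x xC) (falseC x xC); rewrite (negbTE xm) /= /patch => xH.
by rewrite xH.
Qed.

Lemma term_forces_manifestation (H : seq nat) (s t : assignment) (m : nat)
    (C : pclause) :
  {in H, t =1 s} -> all (fun x => (x == m) || (x \in H)) C ->
  sat_term s [seq x <- C | x != m] -> has t C -> t m.
Proof.
move=> ts /allP hC /allP hT /hasP [x xC tx].
case: (eqVneq x m) => [<- //|xm].
have xH : x \in H by move: (hC x xC); rewrite (negbTE xm).
by have := hT x; rewrite mem_filter xm xC -(ts x xH) tx => /(_ isT).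
Qed.

Lemma sat_pcnf_patch_true (H : seq nat) (s : assignment) (F : pcnf) :
  all (has s) [seq C <- F | all (fun x => x \in H) C] ->
  sat_pcnf (patch H s xpredT) F.
Proof.
move=> /allP hF; apply/allP => C CF; rewrite /sat_pclause.
case CH: (all (fun x => x \in H) C).
- have /hasP [x xC sx] : has s C by apply: hF; rewrite mem_filter CH CF.
  by apply/hasP; exists x; rewrite // /patch (allP CH x xC).
- case/allPn: (negbT CH) => x xC xH.
  by apply/hasP; exists x; rewrite // /patch (negbTE xH).
Qed.

Lemma ABD_sat_reduce (I : abd_instance) :
  ABD I -> exists s, sat_simple s (reduce I).
Proof.
case=> E [EH [[s [sKB sE]] entails]].
exists s; apply/andP; split.
- apply/allP => C; rewrite mem_cat => /orP[].
  + by rewrite mem_filter => /andP[_ CKB]; exact: (allP sKB).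
  + by case/mapP=> m; rewrite mem_filter => /andP[_ hm] ->; rewrite /= (entails m hm s).
- apply/allP => D /mapP [m]; rewrite mem_filter => /andP[mH hm] ->.
  set s' := patch (Hyps I) s (predC1 m).
  have s'E : all (lit_holds s') E by rewrite all_lit_holds_patch.
  have /allPn [C CKB s'C] : ~~ sat_pcnf s' (KB I).
    apply/negP => s'KB; move: (entails m hm s' s'KB s'E).
    by rewrite /s' /patch (negbTE mH) /= eqxx.
  have /and3P [mC CmH sT] := falsified_clause_term mH (allP sKB C CKB) s'C.
  apply/hasP; exists [seq x <- C | x != m] => //.
  by apply: map_f; rewrite mem_filter mC CmH.
Qed.

Lemma sat_reduce_ABD (I : abd_instance) (s : assignment) :
  sat_simple s (reduce I) -> ABD I.
Proof.
case/andP=> /allP sCl /allP sDj.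
exists [seq (x, s x) | x <- Hyps I]; split; last split.
- by move=> l /mapP [x hx ->].
- exists (patch (Hyps I) s xpredT); split.
  + by apply: sat_pcnf_patch_true; apply/allP => C hC; apply: sCl; rewrite mem_cat hC.
  + by apply/allP => l /mapP [x hx ->]; rewrite /lit_holds /patch /= hx.
- move=> m hm t tKB tE.
  have ts : {in Hyps I, t =1 s}.
    by move=> x hx; apply/eqP; exact: (allP tE (x, s x) (map_f _ hx)).
  case mH: (m \in Hyps I).
  + have : [:: m] \in sclauses (reduce I) by rewrite mem_cat map_f ?orbT // mem_filter mH.
    by move=> /sCl /=; rewrite orbF ts.
  + have mD : m \in [seq m <- Mans I | m \notin Hyps I] by rewrite mem_filter mH.
    have /hasP [T /mapP [C]] := sDj _ (map_f _ mD).
    rewrite mem_filter => /andP[/andP[_ CmH] CKB] -> sT.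
    exact: term_forces_manifestation ts CmH sT (allP tKB C CKB).
Qed.

Theorem theorem21 (k : nat) (hk : 1 <= k) (I : abd_instance) :
  kCNFpos k (KB I) ->
  is_simple k (reduce I) /\
  (ABD I <-> SimpleSAT k (reduce I)) /\
  size (vars_simple (reduce I)) <= size (vars_abd I) /\
  {subset vars_simple (reduce I) <= Hyps I}.
Proof.
move=> /(reduce_simple hk) simple.
split=> //; split; last by split; [exact: size_vars_reduce | exact: vars_reduce_sub_Hyps].
by split=> [/ABD_sat_reduce | [_ [s /sat_reduce_ABD]]].
Qed.
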